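(* Let $C>0$, $c_{1,i}=\frac{\beta_i}{2C}$, $r=\sqrt{u^2+v^2}$ and for $i=1,2$ $\varphi_{1,i}(u,v,z)=\frac{r^{p_i}z^{q_i}}{(C^{-2}+1)^{\beta_i/2}}\left|\frac{r}{v}\right|^{\beta_i}+c_{1,i}r^{p_i}z^{q_i}\left|\frac{r}{v}\right|^{\beta_i}\int_{u/|v|}^{1/C}(t^2+1)^{\frac{\alpha_i-\beta_i-1}{2}}\,dt.$ Then for all $r_*>0$ sufficiently large, on $\mathcal{R}_1=\{(u,v,z): r\ge r_*,\ C^{-1}|v|\ge u\ge-C|v|,\ 0<z\le1\}$, $\mathcal{L}\varphi_{1,i}(u,v,z)\le-\frac{c_{1,i}}{2}r^{p_i+1}z^{q_i}\left|\frac{r}{v}\right|^{\alpha_i}$, $i=1,2$, and for all $(u,v,1)\in\mathcal{R}_1$, $\mathcal{Q}(\varphi_{1,1}+\varphi_{1,2})(u,v,1)\le-\left(\tfrac{q_2}{2}-\tfrac{p_2}{6}\right)r^{p_2}.$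
   Context: Fix $\gamma>0$, $h\in(0,1)$, $\kappa_1,\kappa_2>0$ and $\alpha_h=\frac13+\frac23h$. Constants $p_i,q_i,\alpha_i,\beta_i$ ($i=1,2$) satisfy $p_1>0$, $p_2>0$, $q_1=0$, $q_2>0$, $0<\alpha_hp_i-(1-h)q_i=\beta_i<\alpha_i<1$, $q_2>\frac13p_2+\frac12\alpha_2$, $p_2>p_1$, $p_2+\frac32\alpha_2>p_1+\frac32\alpha_1$. The operators are $\mathcal{L}=-\gamma u\partial_u-\gamma v\partial_v-\frac{\alpha_hu^2-v^2}{z^{2/3}}\partial_u-(\alpha_h+1)\frac{uv}{z^{2/3}}\partial_v+(1-h)uz^{1/3}\partial_z+\frac{\kappa_1}{z^{2/3}}\partial_u^2+\frac{\kappa_2}{z^{2/3}}\partial_v^2$, $\mathcal{Q}=\frac{u}{3z}\partial_u+\frac{v}{3z}\partial_v-\partial_z$. *)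

From Stdlib Require Import Reals Lra.
From Coquelicot Require Import Coquelicot.
Open Scope R_scope.

Definition rad (u v : R) : R := sqrt (u ^ 2 + v ^ 2).

(* phi_{1,i}(u,v,z) with parameters C, p = p_i, q = q_i, al = alpha_i, be = beta_i;
   c_{1,i} = be / (2 C). *)
Definition phi1 (C p q al be : R) (u v z : R) : R :=
  let r := rad u v in
  Rpower r p * Rpower z q / Rpower (/ (C ^ 2) + 1) (be / 2) * Rpower (Rabs (r / v)) be
  + (be / (2 * C)) * Rpower r p * Rpower z q * Rpower (Rabs (r / v)) be
    * RInt (fun t => Rpower (t ^ 2 + 1) ((al - be - 1) / 2)) (u / Rabs v) (1 / C).

Definition d_u (f : R -> R -> R -> R) (u v z : R) : R := Derive (fun x => f x v z) u.
Definition d_v (f : R -> R -> R -> R) (u v z : R) : R := Derive (fun x => f u x z) v.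
Definition d_z (f : R -> R -> R -> R) (u v z : R) : R := Derive (fun x => f u v x) z.
Definition d_uu (f : R -> R -> R -> R) (u v z : R) : R :=
  Derive (fun x => Derive (fun y => f y v z) x) u.
Definition d_vv (f : R -> R -> R -> R) (u v z : R) : R :=
  Derive (fun x => Derive (fun y => f u y z) x) v.

Definition alpha_h (h : R) : R := 1 / 3 + 2 / 3 * h.

Definition Lop (gamma h k1 k2 : R) (f : R -> R -> R -> R) (u v z : R) : R :=
  - gamma * u * d_u f u v z - gamma * v * d_v f u v z
  - (alpha_h h * u ^ 2 - v ^ 2) / Rpower z (2 / 3) * d_u f u v z
  - (alpha_h h + 1) * (u * v) / Rpower z (2 / 3) * d_v f u v z
  + (1 - h) * u * Rpower z (1 / 3) * d_z f u v z
  + k1 / Rpower z (2 / 3) * d_uu f u v z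
  + k2 / Rpower z (2 / 3) * d_vv f u v z.

Definition Qop (f : R -> R -> R -> R) (u v z : R) : R :=
  u / (3 * z) * d_u f u v z + v / (3 * z) * d_v f u v z - d_z f u v z.

Definition region1 (C rstar u v z : R) : Prop :=
  rad u v >= rstar /\ / C * Rabs v >= u /\ u >= - C * Rabs v /\ 0 < z <= 1.

(* Put s = u/|v| and <s> = sqrt (1 + s^2).  Then r = |v| <s> and |r/v| = <s>,
   so phi_{1,i} = z^q r^p psi(s) = z^q |v|^p H(s) with H = <s>^(p+beta) K and
   K(s) = A + c int_s^(1/C) <t>^(alpha-beta-1) dt.  For any function z^q |v|^p H(u/|v|) the
   Euler relation u d_u + v d_v = p turns Q into (p/3 - q)/z, and turns the first order part
   of L into -gamma p phi plus z^(q-2/3) |v|^(p+1) ((1+s^2) H' - (p+beta) s H), because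
   (alpha_h + 1) p - (1 - h) q = p + beta.  For our H this bracket is exactly
   -c <s>^(p+beta+2) <s>^(alpha-beta-1), i.e. the good term -c z^(q-2/3) r^(p+1) |r/v|^alpha.
   The second order part is z^(q-2/3) |v|^(p-2) times a function of s that is continuous,
   hence bounded, on the sector -C <= s <= 1/C, so it is absorbed once |v| is large.
   For Q, psi_2 >= 1 - beta_2/2 > 1/2 by a monotonicity argument, psi_1 is bounded, and
   r^(p_2) dominates r^(p_1). *)

From Stdlib Require Import Reals Lra.
From Coquelicot Require Import Coquelicot.
Open Scope R_scope.

Lemma Rpower_sub1 w a : 0 < w -> Rpower w (a - 1) = Rpower w a / w.
Proof. intros; unfold Rminus; rewrite Rpower_plus, Rpower_Ropp, Rpower_1 by auto; field; lra. Qed.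

Lemma Rpower_base_1 a : Rpower 1 a = 1.
Proof. unfold Rpower; now rewrite ln_1, Rmult_0_r, exp_0. Qed.

Lemma Rpower_le_1 z a : 0 < z <= 1 -> 0 <= a -> Rpower z a <= 1.
Proof. intros; rewrite <- (Rpower_base_1 a); apply Rle_Rpower_l; lra. Qed.

Lemma Rpower_le_div_Rpower z a b : 0 < z <= 1 -> 0 <= a -> Rpower z b <= Rpower z b / Rpower z a.
Proof.
  intros Hz Ha; pose proof (Rpower_le_1 z a Hz Ha); pose proof (exp_pos (a * ln z)).
  pose proof (exp_pos (b * ln z)); apply Rle_div_r; [apply exp_pos |]; unfold Rpower in *; nra.
Qed.

Lemma Rpower_inv_le y d r : 0 < y -> 0 < d -> Rpower y (/ d) <= r -> y <= Rpower r d.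
Proof.
  intros Hy Hd Hr; rewrite <- (Rpower_1 y), <- (Rinv_l d), <- Rpower_mult by lra.
  apply Rle_Rpower_l; [lra | split; [apply exp_pos | auto]].
Qed.

Lemma is_derive_Rpower_base a x :
  0 < x -> is_derive (fun y => Rpower y a) x (a * Rpower x (a - 1)).
Proof. intros; now apply is_derive_Reals, derivable_pt_lim_power. Qed.

Lemma ex_derive_Rpower_base a x : 0 < x -> ex_derive (fun y => Rpower y a) x.
Proof. intros; eexists; now apply is_derive_Rpower_base. Qed.

Lemma Derive_Rpower_base a x : 0 < x -> Derive (fun y => Rpower y a) x = a * Rpower x a / x.
Proof.
  intros Hx; apply is_derive_unique.
  replace (a * Rpower x a / x) with (a * Rpower x (a - 1))
    by (rewrite Rpower_sub1 by auto; field; lra).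
  now apply is_derive_Rpower_base.
Qed.

Lemma continuous_of_ex_derive (f : R -> R) x : ex_derive f x -> continuous f x.
Proof. apply (ex_derive_continuous (K := R_AbsRing) (V := R_NormedModule)). Qed.

Lemma nonincreasing_of_derive (f df : R -> R) a b :
  a <= b -> (forall x, is_derive f x (df x)) -> (forall x, a <= x <= b -> df x <= 0) ->
  f b <= f a.
Proof.
  intros Hab Hf Hdf.
  destruct (MVT_gen f a b df) as [x [Hx Hmvt]]; auto.
  - intros x _; apply continuity_pt_filterlim, continuous_of_ex_derive; eexists; apply Hf.
  - rewrite Rmin_left, Rmax_right in Hx by auto.
    specialize (Hdf x Hx); nra.
Qed.

Lemma continuous_bounded_above (f : R -> R) a b :
  a <= b -> (forall x, continuous f x) -> exists B, forall x, a <= x <= b -> f x <= B.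
Proof.
  intros Hab Hf; destruct (continuity_ab_maj f a b Hab) as [x [Hx _]].
  - intros; apply continuity_pt_filterlim, Hf.
  - now exists (f x).
Qed.

(* [bracket a s] is <s>^(2a) in the notation above. *)
Definition bracket (a s : R) : R := Rpower (1 + s ^ 2) a.

Lemma bracket_pos a s : 0 < bracket a s.
Proof. apply exp_pos. Qed.

Lemma bracket_plus a b s : bracket (a + b) s = bracket a s * bracket b s.
Proof. apply Rpower_plus. Qed.

Lemma bracket_1 s : bracket 1 s = 1 + s ^ 2.
Proof. apply Rpower_1; nra. Qed.

Lemma bracket_sub1 a s : bracket (a - 1) s = bracket a s / (1 + s ^ 2).
Proof.
  unfold Rminus, Rdiv. rewrite bracket_plus, <- bracket_1. unfold bracket.
  now rewrite Rpower_Ropp.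
Qed.

Lemma bracket_le_exp a b s : a <= b -> bracket a s <= bracket b s.
Proof. intros; apply Rle_Rpower; nra. Qed.

Lemma bracket_ge1 a s : 0 <= a -> 1 <= bracket a s.
Proof. intros; rewrite <- (Rpower_O (1 + s ^ 2)) by nra; now apply bracket_le_exp. Qed.

Lemma bracket_le1 a s : a <= 0 -> bracket a s <= 1.
Proof. intros; rewrite <- (Rpower_O (1 + s ^ 2)) by nra; now apply bracket_le_exp. Qed.

Lemma bracket_le_sq a s s' : 0 <= a -> s ^ 2 <= s' ^ 2 -> bracket a s <= bracket a s'.
Proof. intros; apply Rle_Rpower_l; nra. Qed.

Lemma bracket_neg_half_sq x : bracket (- (1 / 2)) x * bracket (- (1 / 2)) x = / (1 + x ^ 2).
Proof.
  rewrite <- bracket_plus; replace (- (1 / 2) + - (1 / 2)) with (0 - 1) by field.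
  rewrite bracket_sub1; unfold bracket; rewrite Rpower_O by nra; field; nra.
Qed.

Lemma is_derive_bracket a s : is_derive (bracket a) s (2 * a * s * bracket (a - 1) s).
Proof.
  replace (2 * a * s * bracket (a - 1) s) with (2 * s * (a * Rpower (1 + s ^ 2) (a - 1)))
    by (unfold bracket; ring).
  apply (is_derive_comp (fun y => Rpower y a) (fun y => 1 + y ^ 2)).
  - apply is_derive_Rpower_base; nra.
  - auto_derive; auto; ring.
Qed.

Lemma ex_derive_bracket a s : ex_derive (bracket a) s.
Proof. eexists; apply is_derive_bracket. Qed.

Lemma Derive_bracket a s : Derive (bracket a) s = 2 * a * s * bracket (a - 1) s.
Proof. apply is_derive_unique, is_derive_bracket. Qed.

Lemma continuous_bracket a s : continuous (bracket a) s.
Proof. apply continuous_of_ex_derive, ex_derive_bracket. Qed.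

Lemma ex_RInt_bracket a x y : ex_RInt (bracket a) x y.
Proof.
  apply (ex_RInt_continuous (V := R_CompleteNormedModule)); intros; apply continuous_bracket.
Qed.

Definition tail_integral (e t s : R) : R := RInt (bracket e) s t.

Lemma is_derive_tail_integral e t s : is_derive (tail_integral e t) s (- bracket e s).
Proof.
  apply (is_derive_RInt' (bracket e) (tail_integral e t) s t); [| apply continuous_bracket].
  apply filter_forall; intros; apply (RInt_correct (V := R_CompleteNormedModule)), ex_RInt_bracket.
Qed.

Lemma ex_derive_tail_integral e t s : ex_derive (tail_integral e t) s.
Proof. eexists; apply is_derive_tail_integral. Qed.

Lemma Derive_tail_integral e t s : Derive (tail_integral e t) s = - bracket e s.
Proof. apply is_derive_unique, is_derive_tail_integral. Qed.

Lemma tail_integral_nonneg e t s : s <= t -> 0 <= tail_integral e t s.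
Proof.
  intros; apply RInt_ge_0; auto.
  - apply ex_RInt_bracket.
  - intros; apply Rlt_le, bracket_pos.
Qed.

Lemma tail_integral_end e t : tail_integral e t t = 0.
Proof. apply (RInt_point (V := R_CompleteNormedModule)). Qed.

Ltac derivable_profile := repeat split; auto using ex_derive_bracket, ex_derive_tail_integral.

Ltac derive_profile :=
  auto_derive; [derivable_profile | rewrite ?Derive_bracket, ?Derive_tail_integral].

Section Profile.

Variables (m A c e t : R).

Definition profile (s : R) : R := bracket m s * (A + c * tail_integral e t s).

Definition profile' (s : R) : R :=
  2 * m * s * bracket (m - 1) s * (A + c * tail_integral e t s) - c * bracket m s * bracket e s.

Definition profile'' (s : R) : R :=
  (2 * m * bracket (m - 1) s + 4 * m * (m - 1) * s ^ 2 * bracket (m - 2) s)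
    * (A + c * tail_integral e t s)
  - 4 * m * c * s * bracket (m - 1) s * bracket e s
  - 2 * e * c * s * bracket m s * bracket (e - 1) s.

Lemma is_derive_profile s : is_derive profile s (profile' s).
Proof. unfold profile, profile'. derive_profile. ring. Qed.

Lemma is_derive_profile' s : is_derive profile' s (profile'' s).
Proof.
  unfold profile', profile''. derive_profile.
  replace (m - 1 - 1) with (m - 2) by ring. ring.
Qed.

Lemma continuous_profile s : continuous profile s.
Proof. apply continuous_of_ex_derive; eexists; apply is_derive_profile. Qed.

Lemma profile_transport s :
  (1 + s ^ 2) * profile' s - 2 * m * s * profile s
  = - c * (1 + s ^ 2) * bracket m s * bracket e s.
Proof. unfold profile, profile'; rewrite bracket_sub1; field; nra. Qed.

End Profile.

Lemma profile_split a b A c e t s :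
  profile (a + b) A c e t s = bracket a s * profile b A c e t s.
Proof. unfold profile; rewrite bracket_plus; ring. Qed.

Lemma profile_pos m A c e t s : 0 < A -> 0 <= c -> s <= t -> 0 < profile m A c e t s.
Proof.
  intros; unfold profile; pose proof (tail_integral_nonneg e t s ltac:(auto)).
  apply Rmult_lt_0_compat; [apply bracket_pos | nra].
Qed.

Section ProfileLowerBound.

Variables (be A e t : R).
Hypotheses (Hbe : 0 < be < 1) (He : - (1 / 2) <= e) (Ht : 0 <= t)
  (HA : A * bracket (be / 2) t = 1).

Definition lower_profile (x : R) : R :=
  A * bracket (be / 2) x + be / 2 * t * tail_integral e t x.

Let A_pos : 0 < A.
Proof. pose proof (bracket_pos (be / 2) t); nra. Qed.

(* Adding [be/2 <x>^(-1/2)] makes the function nonincreasing on [0, t]. *)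
Lemma lower_profile_ge_nonneg x : 0 <= x <= t -> 1 - be / 2 <= lower_profile x.
Proof.
  intros Hx.
  set (D y := lower_profile y + be / 2 * bracket (- (1 / 2)) y).
  assert (HD : D t <= D x).
  { apply (nonincreasing_of_derive D (fun y => be * y * A * bracket (be / 2 - 1) y
             - be / 2 * t * bracket e y - be / 2 * y * bracket (- (1 / 2) - 1) y)); [lra | |].
    - intros y; unfold D, lower_profile; derive_profile; field.
    - intros y Hy.
      assert (Hy2 := bracket_neg_half_sq y).
      assert (Hy0 := bracket_pos (- (1 / 2)) y).
      assert (Hye : bracket (- (1 / 2)) y <= bracket e y) by now apply bracket_le_exp.
      assert (HAy : A * bracket (be / 2) y <= 1).
      { rewrite <- HA; apply Rmult_le_compat_l; [apply Rlt_le, A_pos |].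
        apply bracket_le_sq; nra. }
      rewrite !bracket_sub1, !(Rdiv_def _ (1 + y ^ 2)), <- Hy2.
      set (z := bracket (- (1 / 2)) y) in *.
      assert (be * y * A * (bracket (be / 2) y * (z * z)) <= be * y * (z * z)).
      { assert (0 <= be * y * (z * z)) by (apply Rmult_le_pos; nra).
        replace (be * y * A * (bracket (be / 2) y * (z * z)))
          with (A * bracket (be / 2) y * (be * y * (z * z))) by ring.
        nra. }
      assert (be / 2 * (y * z) <= be / 2 * (t * bracket e y))
        by (apply Rmult_le_compat_l; [lra | apply Rmult_le_compat; lra]).
      assert (0 <= be / 2 * y * z * (1 - z) ^ 2)
        by (apply Rmult_le_pos; [repeat apply Rmult_le_pos; lra | apply pow2_ge_0]).
      nra. }
  unfold D, lower_profile in HD |- *; rewrite tail_integral_end in HD.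
  assert (bracket (- (1 / 2)) x <= 1) by (apply bracket_le1; lra).
  pose proof (bracket_pos (- (1 / 2)) t).
  nra.
Qed.

Lemma lower_profile_ge x : x <= t -> 1 - be / 2 <= lower_profile x.
Proof.
  intros Hx; destruct (Rle_dec 0 x) as [Hx0 | Hx0].
  - now apply lower_profile_ge_nonneg.
  - apply Rle_trans with (lower_profile 0); [apply lower_profile_ge_nonneg; lra |].
    apply (nonincreasing_of_derive lower_profile
             (fun y => be * y * A * bracket (be / 2 - 1) y - be / 2 * t * bracket e y)); [lra | |].
    + intros y; unfold lower_profile; derive_profile; field.
    + intros y Hy.
      pose proof A_pos; pose proof (bracket_pos (be / 2 - 1) y);
      pose proof (bracket_pos e y).
      assert (0 <= A * bracket (be / 2 - 1) y) by nra.
      assert (be * y * (A * bracket (be / 2 - 1) y) <= 0)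
        by (apply Rmult_le_0_r; [nra | lra]).
      assert (0 <= be / 2 * t * bracket e y) by (repeat apply Rmult_le_pos; lra).
      nra.
Qed.

End ProfileLowerBound.

Lemma profile_ge (be A e t x : R) :
  0 < be < 1 -> - (1 / 2) <= e -> 0 <= t -> x <= t -> A * bracket (be / 2) t = 1 ->
  1 - be / 2 <= profile (be / 2) A (be / 2 * t) e t x.
Proof.
  intros Hbe He Ht Hx HA.
  apply Rle_trans with (lower_profile be A e t x); [now apply lower_profile_ge |].
  unfold lower_profile, profile.
  pose proof (bracket_ge1 (be / 2) x ltac:(lra)).
  pose proof (tail_integral_nonneg e t x Hx).
  assert (0 <= be / 2 * t * tail_integral e t x) by (apply Rmult_le_pos; nra).
  nra.
Qed.

Lemma Rabs_sign v : Rabs v = sign v * v.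
Proof.
  destruct (Rtotal_order v 0) as [Hv | [-> | Hv]].
  - rewrite sign_eq_m1, Rabs_left; lra.
  - rewrite sign_0, Rabs_R0; ring.
  - rewrite sign_eq_1, Rabs_right; lra.
Qed.

Lemma sign_sqr v : v <> 0 -> sign v * sign v = 1.
Proof. intros; rewrite <- sign_mult; apply sign_eq_1, (Rsqr_pos_lt v); auto. Qed.

Lemma locally_same_sign v : v <> 0 -> locally v (fun y => y <> 0 /\ sign y = sign v).
Proof.
  intros Hv; assert (Hpos : 0 < Rabs v) by now apply Rabs_pos_lt.
  exists (mkposreal _ Hpos); intros y Hy; change (Rabs (y - v) < Rabs v) in Hy.
  apply Rabs_def2 in Hy.
  destruct (Rlt_or_le 0 v) as [Hv0 | Hv0].
  - rewrite Rabs_right in Hy by lra; rewrite !sign_eq_1; lra.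
  - rewrite Rabs_left in Hy by lra; rewrite !sign_eq_m1; lra.
Qed.

Lemma is_derive_comp_Rabs (G : R -> R) v dG :
  v <> 0 -> is_derive G (Rabs v) dG -> is_derive (fun y => G (Rabs y)) v (sign v * dG).
Proof.
  intros Hv HG.
  replace (sign v * dG) with (sign v * 1 * dG) by ring.
  apply (is_derive_comp G Rabs); auto.
  apply (is_derive_Rabs (fun y => y)); auto; apply (is_derive_id (K := R_AbsRing)).
Qed.

Lemma Derive2_comp_Rabs (G dG ddG : R -> R) v :
  v <> 0 -> (forall w, 0 < w -> is_derive G w (dG w)) ->
  (forall w, 0 < w -> is_derive dG w (ddG w)) ->
  Derive (fun y => Derive (fun x => G (Rabs x)) y) v = ddG (Rabs v).
Proof.
  intros Hv HG HdG.
  rewrite (Derive_ext_loc _ (fun y => sign v * dG (Rabs y))).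
  2: { apply (filter_imp (fun y => y <> 0 /\ sign y = sign v)); [| now apply locally_same_sign].
       intros y [Hy Hs]; rewrite <- Hs.
       apply is_derive_unique, is_derive_comp_Rabs, HG, Rabs_pos_lt; auto. }
  apply is_derive_unique.
  replace (ddG (Rabs v)) with (sign v * (sign v * ddG (Rabs v)))
    by (rewrite <- Rmult_assoc, sign_sqr; auto; ring).
  apply is_derive_scal, is_derive_comp_Rabs, HdG, Rabs_pos_lt; auto.
Qed.

Section Homogeneous.

Variables (H H' H'' : R -> R) (p q : R).
Hypotheses (HH : forall s, is_derive H s (H' s)) (HH' : forall s, is_derive H' s (H'' s)).

Definition homog (u v z : R) : R := Rpower z q * (Rpower (Rabs v) p * H (u / Rabs v)).

Let ex_derive_H s : ex_derive H s := ex_intro _ _ (HH s).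
Let ex_derive_H' s : ex_derive H' s := ex_intro _ _ (HH' s).
Let Derive_H s : Derive H s = H' s := is_derive_unique _ _ _ (HH s).
Let Derive_H' s : Derive H' s = H'' s := is_derive_unique _ _ _ (HH' s).

Ltac derive_homog :=
  auto_derive;
  [repeat split; auto using ex_derive_H, ex_derive_H', ex_derive_Rpower_base; try lra
  | rewrite ?Derive_H, ?Derive_H', ?Derive_Rpower_base by lra].

Lemma is_derive_homog_u (u v z : R) : v <> 0 ->
  is_derive (fun x => homog x v z) u
    (Rpower z q * (Rpower (Rabs v) p / Rabs v * H' (u / Rabs v))).
Proof.
  intros Hv; pose proof (Rabs_pos_lt v Hv); unfold homog; derive_homog.
  unfold Rdiv; field; lra.
Qed.

Lemma is_derive_homog_z (u v z : R) : 0 < z ->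
  is_derive (fun x => homog u v x) z (q * Rpower z q / z * (Rpower (Rabs v) p * H (u / Rabs v))).
Proof. intros Hz; unfold homog; derive_homog; unfold Rdiv; field; lra. Qed.

Lemma is_derive_homog_v (u v z : R) : v <> 0 ->
  is_derive (fun y => homog u y z) v
    (sign v * (Rpower z q * (Rpower (Rabs v) p / Rabs v
       * (p * H (u / Rabs v) - u / Rabs v * H' (u / Rabs v))))).
Proof.
  intros Hv; pose proof (Rabs_pos_lt v Hv); unfold homog.
  apply (is_derive_comp_Rabs (fun w => Rpower z q * (Rpower w p * H (u / w)))); auto.
  derive_homog; unfold Rdiv; field; lra.
Qed.

Lemma ex_derive_homog_u (u v z : R) : v <> 0 -> ex_derive (fun x => homog x v z) u.
Proof. intros; eexists; now apply is_derive_homog_u. Qed.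

Lemma ex_derive_homog_v (u v z : R) : v <> 0 -> ex_derive (fun y => homog u y z) v.
Proof. intros; eexists; now apply is_derive_homog_v. Qed.

Lemma ex_derive_homog_z (u v z : R) : 0 < z -> ex_derive (fun x => homog u v x) z.
Proof. intros; eexists; now apply is_derive_homog_z. Qed.

Lemma d_u_homog (u v z : R) : v <> 0 ->
  d_u homog u v z = Rpower z q * (Rpower (Rabs v) p / Rabs v * H' (u / Rabs v)).
Proof. intros; now apply is_derive_unique, is_derive_homog_u. Qed.

Lemma d_z_homog (u v z : R) : 0 < z ->
  d_z homog u v z = q * Rpower z q / z * (Rpower (Rabs v) p * H (u / Rabs v)).
Proof. intros; now apply is_derive_unique, is_derive_homog_z. Qed.

Lemma v_d_v_homog (u v z : R) : v <> 0 ->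
  v * d_v homog u v z
  = Rpower z q * (Rpower (Rabs v) p * (p * H (u / Rabs v) - u / Rabs v * H' (u / Rabs v))).
Proof.
  intros Hv; pose proof (Rabs_pos_lt v Hv).
  unfold d_v; erewrite is_derive_unique by now apply is_derive_homog_v.
  rewrite <- Rmult_assoc, (Rmult_comm v), <- Rabs_sign; field; lra.
Qed.

Lemma d_uu_homog (u v z : R) : v <> 0 ->
  d_uu homog u v z = Rpower z q * (Rpower (Rabs v) p / Rabs v ^ 2 * H'' (u / Rabs v)).
Proof.
  intros Hv; pose proof (Rabs_pos_lt v Hv); unfold d_uu.
  rewrite (Derive_ext _ _ _ (fun x => is_derive_unique _ _ _ (is_derive_homog_u x v z Hv))).
  apply is_derive_unique; derive_homog; unfold Rdiv; field; lra.
Qed.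

Lemma d_vv_homog (u v z : R) : v <> 0 ->
  d_vv homog u v z
  = Rpower z q * (Rpower (Rabs v) p / Rabs v ^ 2
      * (p * (p - 1) * H (u / Rabs v) - 2 * (p - 1) * (u / Rabs v) * H' (u / Rabs v)
         + (u / Rabs v) ^ 2 * H'' (u / Rabs v))).
Proof.
  intros Hv; unfold d_vv, homog.
  rewrite (Derive2_comp_Rabs (fun w => Rpower z q * (Rpower w p * H (u / w)))
    (fun w => Rpower z q * (Rpower w p / w * (p * H (u / w) - u / w * H' (u / w))))
    (fun w => Rpower z q * (Rpower w p / w ^ 2 * (p * (p - 1) * H (u / w)
       - 2 * (p - 1) * (u / w) * H' (u / w) + (u / w) ^ 2 * H'' (u / w)))) v Hv);
  [reflexivity | intros w Hw; derive_homog; unfold Rdiv; field; lra ..].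
Qed.

Lemma euler_homog (u v z : R) : v <> 0 ->
  u * d_u homog u v z + v * d_v homog u v z = p * homog u v z.
Proof.
  intros Hv; pose proof (Rabs_pos_lt v Hv).
  rewrite d_u_homog, v_d_v_homog by auto; unfold homog; field; lra.
Qed.

Lemma Qop_homog (u v z : R) : v <> 0 -> 0 < z -> Qop homog u v z = (p / 3 - q) / z * homog u v z.
Proof.
  intros Hv Hz.
  replace (Qop homog u v z) with ((u * d_u homog u v z + v * d_v homog u v z) / (3 * z)
    - d_z homog u v z) by (unfold Qop; field; lra).
  rewrite euler_homog, d_z_homog by auto; unfold homog; field; lra.
Qed.

Definition diffusion (k1 k2 s : R) : R :=
  k1 * H'' s + k2 * (p * (p - 1) * H s - 2 * (p - 1) * s * H' s + s ^ 2 * H'' s).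

Lemma Lop_homog (gamma h k1 k2 u v z : R) : v <> 0 -> 0 < z ->
  let s := u / Rabs v in
  Lop gamma h k1 k2 homog u v z
  = - gamma * p * homog u v z
    + Rpower z q / Rpower z (2 / 3)
      * (Rpower (Rabs v) p * Rabs v
           * ((1 + s ^ 2) * H' s - ((alpha_h h + 1) * p - (1 - h) * q) * s * H s)
         + Rpower (Rabs v) p / Rabs v ^ 2 * diffusion k1 k2 s).
Proof.
  intros Hv Hz s; pose proof (Rabs_pos_lt v Hv).
  replace (Lop gamma h k1 k2 homog u v z) with
    (- gamma * (u * d_u homog u v z + v * d_v homog u v z)
     + (- (alpha_h h * u ^ 2 - v ^ 2) * d_u homog u v z
        - (alpha_h h + 1) * u * (v * d_v homog u v z)) / Rpower z (2 / 3)
     + (1 - h) * u * Rpower z (1 / 3) * d_z homog u v z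
     + (k1 * d_uu homog u v z + k2 * d_vv homog u v z) / Rpower z (2 / 3))
    by (unfold Lop; field; apply Rgt_not_eq, exp_pos).
  rewrite euler_homog, d_u_homog, v_d_v_homog, d_z_homog, d_uu_homog, d_vv_homog by auto.
  fold s; unfold homog, diffusion; fold s.
  assert (Hu : u = s * Rabs v) by (unfold s; field; lra).
  rewrite <- (pow2_abs v), Hu.
  assert (Hz3 : z = Rpower z (1 / 3) * Rpower z (2 / 3))
    by (rewrite <- Rpower_plus, <- (Rpower_1 z) at 1 by auto; f_equal; field).
  assert (0 < Rpower z (1 / 3)) by apply exp_pos; assert (0 < Rpower z (2 / 3)) by apply exp_pos.
  set (Zq := Rpower z q) in *; set (Z1 := Rpower z (1 / 3)) in *;
  set (Z2 := Rpower z (2 / 3)) in *.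
  clearbody Zq Z1 Z2 s; subst z.
  field; repeat split; apply Rgt_not_eq; auto.
Qed.

End Homogeneous.

Lemma continuous_profile_diffusion m A c e t p k1 k2 s :
  continuous (diffusion (profile m A c e t) (profile' m A c e t) (profile'' m A c e t) p k1 k2) s.
Proof.
  apply continuous_of_ex_derive; unfold diffusion, profile, profile', profile''.
  auto_derive; derivable_profile.
Qed.

(* [phi1] and [homog] agree only off the axis [v = 0], where [r / v] and [u / |v|] are junk
   values; partial derivatives are local, so this is enough. *)
Section OffAxis.

Variables f g : R -> R -> R -> R.
Hypothesis Hfg : forall u v z, v <> 0 -> f u v z = g u v z.

Let locally_nonzero v : v <> 0 -> locally v (fun y => y <> 0).
Proof.
  intros; apply (filter_imp (fun y => y <> 0 /\ sign y = sign v));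
    [tauto | now apply locally_same_sign].
Qed.

Let d_v_near u v z : v <> 0 -> Derive (fun y => f u y z) v = Derive (fun y => g u y z) v.
Proof.
  intros; apply Derive_ext_loc, (filter_imp (fun y => y <> 0));
    [intros y Hy; now apply Hfg | now apply locally_nonzero].
Qed.

Lemma Lop_off_axis gamma h k1 k2 u v z :
  v <> 0 -> Lop gamma h k1 k2 f u v z = Lop gamma h k1 k2 g u v z.
Proof.
  intros Hv; unfold Lop, d_u, d_v, d_z, d_uu, d_vv.
  rewrite (Derive_ext (fun x => f x v z) (fun x => g x v z)), d_v_near,
    (Derive_ext (fun x => f u v x) (fun x => g u v x)),
    (Derive_ext (fun x => Derive (fun y => f y v z) x) (fun x => Derive (fun y => g y v z) x)),
    (Derive_ext_loc (fun x => Derive (fun y => f u y z) x) (fun x => Derive (fun y => g u y z) x));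
  auto; intros.
  - apply (filter_imp (fun y => y <> 0));
      [intros y Hy; now apply d_v_near | now apply locally_nonzero].
  - apply Derive_ext; auto.
Qed.

Lemma Qop_off_axis u v z : v <> 0 -> Qop f u v z = Qop g u v z.
Proof.
  intros Hv; unfold Qop, d_u, d_v, d_z.
  rewrite (Derive_ext (fun x => f x v z) (fun x => g x v z)), d_v_near,
    (Derive_ext (fun x => f u v x) (fun x => g u v x)); auto.
Qed.

End OffAxis.

Lemma Qop_plus (f g : R -> R -> R -> R) (u v z : R) :
  ex_derive (fun x => f x v z) u -> ex_derive (fun x => g x v z) u ->
  ex_derive (fun y => f u y z) v -> ex_derive (fun y => g u y z) v ->
  ex_derive (fun x => f u v x) z -> ex_derive (fun x => g u v x) z ->
  Qop (fun a b c => f a b c + g a b c) u v z = Qop f u v z + Qop g u v z.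
Proof.
  intros; unfold Qop, d_u, d_v, d_z; rewrite !Derive_plus by auto.
  change (fun x => f u v x) with (f u v); change (fun x => g u v x) with (g u v); ring.
Qed.

Lemma rad_eq u v : v <> 0 -> rad u v = Rabs v * sqrt (1 + (u / Rabs v) ^ 2).
Proof.
  intros Hv; pose proof (Rabs_pos_lt v Hv).
  rewrite <- (sqrt_pow2 (Rabs v)) at 1 by lra; rewrite <- sqrt_mult by nra.
  unfold rad; f_equal; rewrite <- (pow2_abs v); field; lra.
Qed.

Lemma Rpower_rad u v a : v <> 0 ->
  Rpower (rad u v) a = Rpower (Rabs v) a * bracket (a / 2) (u / Rabs v).
Proof.
  intros Hv; pose proof (Rabs_pos_lt v Hv).
  rewrite rad_eq, <- Rpower_mult_distr, <- Rpower_sqrt, Rpower_mult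
    by (auto; try apply sqrt_lt_R0; nra).
  unfold bracket; do 2 f_equal; field.
Qed.

Lemma Rpower_rad_div u v a : v <> 0 ->
  Rpower (Rabs (rad u v / v)) a = bracket (a / 2) (u / Rabs v).
Proof.
  intros Hv; pose proof (Rabs_pos_lt v Hv).
  assert (Hs : 0 < sqrt (1 + (u / Rabs v) ^ 2)) by (apply sqrt_lt_R0; nra).
  replace (Rabs (rad u v / v)) with (sqrt (1 + (u / Rabs v) ^ 2)).
  - rewrite <- Rpower_sqrt, Rpower_mult by nra; unfold bracket; f_equal; field.
  - rewrite rad_eq, Rabs_div, Rabs_mult, Rabs_Rabsolu, (Rabs_right (sqrt _)) by lra; field; lra.
Qed.

Lemma Rpower_Rabs_le_rad u v a : v <> 0 -> 0 <= a -> Rpower (Rabs v) a <= Rpower (rad u v) a.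
Proof.
  intros Hv Ha; rewrite Rpower_rad by auto.
  pose proof (bracket_ge1 (a / 2) (u / Rabs v) ltac:(lra)).
  assert (0 < Rpower (Rabs v) a) by apply exp_pos; nra.
Qed.

Lemma Rpower_rad_div_ge1 u v a : v <> 0 -> 0 <= a -> 1 <= Rpower (Rabs (rad u v / v)) a.
Proof. intros; rewrite Rpower_rad_div by auto; apply bracket_ge1; lra. Qed.

Lemma sector_ratio C u v : 0 < C -> v <> 0 -> - C * Rabs v <= u <= / C * Rabs v ->
  - C <= u / Rabs v <= 1 / C.
Proof.
  intros HC Hv Hu; pose proof (Rabs_pos_lt v Hv).
  split; [apply Rle_div_r | apply Rle_div_l]; auto; unfold Rdiv; lra.
Qed.

Lemma region1_sector C rstar u v z : 0 < C -> 0 < rstar -> region1 C rstar u v z ->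
  v <> 0 /\ - C * Rabs v <= u <= / C * Rabs v
  /\ rstar <= sqrt (1 + (C ^ 2 + (1 / C) ^ 2)) * Rabs v.
Proof.
  intros HC Hr [Hrad [Hu1 [Hu2 _]]].
  assert (Hv : v <> 0).
  { intros ->; rewrite Rabs_R0 in *; assert (u = 0) by lra; subst u.
    unfold rad in Hrad; replace (0 ^ 2 + 0 ^ 2) with 0 in Hrad by ring.
    rewrite sqrt_0 in Hrad; lra. }
  assert (Hu : - C * Rabs v <= u <= / C * Rabs v) by lra.
  pose proof (sector_ratio C u v HC Hv Hu) as Hs; pose proof (Rabs_pos_lt v Hv).
  repeat split; auto; try lra.
  rewrite Rmult_comm; apply Rge_le, Rge_trans with (rad u v); auto.
  rewrite rad_eq by auto; apply Rle_ge, Rmult_le_compat_l; [lra |].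
  apply sqrt_le_1_alt; assert (0 < 1 / C) by (apply Rdiv_lt_0_compat; lra).
  destruct (Rle_dec 0 (u / Rabs v)); nra.
Qed.

Section Phi1.

Variables (C al be : R).

Definition phi1_A : R := / Rpower (/ C ^ 2 + 1) (be / 2).

Definition phi1_psi : R -> R :=
  profile (be / 2) phi1_A (be / (2 * C)) ((al - be - 1) / 2) (1 / C).

Lemma phi1_eq p q u v z : v <> 0 ->
  phi1 C p q al be u v z = Rpower z q * Rpower (rad u v) p * phi1_psi (u / Rabs v).
Proof.
  intros Hv; unfold phi1, phi1_psi, profile, phi1_A; cbv zeta.
  rewrite Rpower_rad_div by auto.
  replace (RInt _ (u / Rabs v) (1 / C))
    with (tail_integral ((al - be - 1) / 2) (1 / C) (u / Rabs v))
    by (apply RInt_ext; intros; unfold bracket; f_equal; ring).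
  unfold Rdiv; ring.
Qed.

Lemma phi1_psi_pos s : 0 < C -> 0 <= be -> s <= 1 / C -> 0 < phi1_psi s.
Proof.
  intros; apply profile_pos; [apply Rinv_0_lt_compat, exp_pos | | auto].
  apply Rmult_le_pos; [lra | apply Rlt_le, Rinv_0_lt_compat; lra].
Qed.

Lemma phi1_psi_ge s :
  0 < C -> 0 < be < 1 -> be <= al -> s <= 1 / C -> 1 - be / 2 <= phi1_psi s.
Proof.
  intros HC Hbe Hal Hs; unfold phi1_psi.
  replace (be / (2 * C)) with (be / 2 * (1 / C)) by (field; lra).
  apply profile_ge; auto; try lra.
  - apply Rlt_le, Rdiv_lt_0_compat; lra.
  - unfold phi1_A, bracket; replace (1 + (1 / C) ^ 2) with (/ C ^ 2 + 1) by (field; lra).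
    field; apply Rgt_not_eq, exp_pos.
Qed.

Let prof p := profile ((p + be) / 2) phi1_A (be / (2 * C)) ((al - be - 1) / 2) (1 / C).
Let prof' p := profile' ((p + be) / 2) phi1_A (be / (2 * C)) ((al - be - 1) / 2) (1 / C).
Let prof'' p := profile'' ((p + be) / 2) phi1_A (be / (2 * C)) ((al - be - 1) / 2) (1 / C).

Lemma phi1_homog p q u v z : v <> 0 -> phi1 C p q al be u v z = homog (prof p) p q u v z.
Proof.
  intros Hv; rewrite phi1_eq, Rpower_rad by auto; unfold homog, prof, phi1_psi.
  replace ((p + be) / 2) with (p / 2 + be / 2) by field; rewrite profile_split; ring.
Qed.

Lemma Lop_phi1_eq gamma h k1 k2 p q u v z : v <> 0 -> 0 < z ->
  be = alpha_h h * p - (1 - h) * q ->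
  Lop gamma h k1 k2 (phi1 C p q al be) u v z
  = - gamma * p * phi1 C p q al be u v z
    - be / (2 * C) * (Rpower z q / Rpower z (2 / 3))
      * Rpower (rad u v) (p + 1) * Rpower (Rabs (rad u v / v)) al
    + Rpower z q / Rpower z (2 / 3) * (Rpower (Rabs v) p / Rabs v ^ 2)
      * diffusion (prof p) (prof' p) (prof'' p) p k1 k2 (u / Rabs v).
Proof.
  intros Hv Hz Hbe; pose proof (Rabs_pos_lt v Hv).
  rewrite (Lop_off_axis _ (homog (prof p) p q)) by (auto; intros; now apply phi1_homog).
  rewrite phi1_homog by auto.
  rewrite (Lop_homog (prof p) (prof' p) (prof'' p)) by
    (auto; intros; apply is_derive_profile || apply is_derive_profile').
  cbv zeta; set (s := u / Rabs v).
  replace ((alpha_h h + 1) * p - (1 - h) * q) with (2 * ((p + be) / 2))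
    by (unfold alpha_h in *; lra).
  unfold prof, prof'; rewrite profile_transport.
  rewrite Rpower_rad, Rpower_rad_div, Rpower_plus, Rpower_1 by auto; fold s.
  replace ((p + 1) / 2) with ((p + be) / 2 + (1 - be) / 2) by field.
  replace (al / 2) with ((al - be - 1) / 2 + (1 + be) / 2) by field.
  replace (1 + s ^ 2) with (bracket ((1 - be) / 2) s * bracket ((1 + be) / 2) s)
    by (rewrite <- bracket_plus, <- bracket_1; f_equal; field).
  rewrite !bracket_plus; unfold Rdiv; ring.
Qed.

Lemma Lop_phi1_le gamma h k1 k2 p q :
  0 <= gamma -> 0 <= p -> 0 < C -> 0 < be -> be <= al -> be = alpha_h h * p - (1 - h) * q ->
  exists W0, 0 < W0 /\ forall u v z, v <> 0 -> W0 <= Rabs v ->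
    - C * Rabs v <= u <= / C * Rabs v -> 0 < z <= 1 ->
    Lop gamma h k1 k2 (phi1 C p q al be) u v z
    <= - (be / (2 * C)) / 2 * Rpower (rad u v) (p + 1) * Rpower z q
       * Rpower (Rabs (rad u v / v)) al.
Proof.
  intros Hg Hp HC Hbe Hal Hrel.
  set (c := be / (2 * C)); assert (Hc : 0 < c) by (apply Rdiv_lt_0_compat; lra).
  destruct (continuous_bounded_above (diffusion (prof p) (prof' p) (prof'' p) p k1 k2)
    (- C) (1 / C)) as [B HB];
    [pose proof (Rinv_0_lt_compat C HC); unfold Rdiv; lra | apply continuous_profile_diffusion |].
  assert (HB0 : 0 <= 2 * Rabs B / c) by (apply Rdiv_le_0_compat; [pose proof (Rabs_pos B) |]; lra).
  exists (1 + 2 * Rabs B / c); split; [lra |].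
  intros u v z Hv HW Hu Hz; rewrite Lop_phi1_eq by (auto; lra); fold c.
  pose proof (sector_ratio C u v HC Hv Hu) as Hs; pose proof (Rabs_pos_lt v Hv).
  assert (Hphi : 0 <= phi1 C p q al be u v z).
  { rewrite phi1_eq by auto; apply Rlt_le, Rmult_lt_0_compat.
    - apply Rmult_lt_0_compat; apply exp_pos.
    - apply phi1_psi_pos; lra. }
  assert (HD : diffusion (prof p) (prof' p) (prof'' p) p k1 k2 (u / Rabs v) <= c / 2 * Rabs v ^ 3).
  { pose proof (HB _ Hs); pose proof (Rle_abs B).
    assert (Rabs B <= c / 2 * Rabs v).
    { apply (Rmult_le_reg_l (2 / c)); [apply Rdiv_lt_0_compat; lra |].
      replace (2 / c * (c / 2 * Rabs v)) with (Rabs v) by (field; lra); lra. }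
    assert (Rabs v <= Rabs v ^ 3) by nra.
    nra. }
  assert (HP : Rpower (Rabs v) p * Rabs v
               <= Rpower (rad u v) (p + 1) * Rpower (Rabs (rad u v / v)) al).
  { rewrite <- (Rpower_1 (Rabs v)) at 2 by auto; rewrite <- Rpower_plus.
    pose proof (Rpower_Rabs_le_rad u v (p + 1) Hv ltac:(lra)).
    pose proof (Rpower_rad_div_ge1 u v al Hv ltac:(lra)).
    pose proof (exp_pos ((p + 1) * ln (rad u v))).
    unfold Rpower in *; nra. }
  pose proof (Rpower_le_div_Rpower z (2 / 3) q Hz ltac:(lra)) as HZ.
  set (Y := Rpower z q / Rpower z (2 / 3)) in *; set (Zq := Rpower z q) in *.
  set (W := Rpower (Rabs v) p) in *.
  set (P := Rpower (rad u v) (p + 1) * Rpower (Rabs (rad u v / v)) al) in *.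
  assert (HY : 0 < Zq) by apply exp_pos.
  assert (HW0 : 0 < W) by apply exp_pos.
  assert (Y * (W / Rabs v ^ 2) * diffusion (prof p) (prof' p) (prof'' p) p k1 k2 (u / Rabs v)
          <= c / 2 * (Y * (W * Rabs v))).
  { apply Rle_trans with (Y * (W / Rabs v ^ 2) * (c / 2 * Rabs v ^ 3)).
    - apply Rmult_le_compat_l; auto.
      apply Rmult_le_pos; [lra | apply Rlt_le, Rdiv_lt_0_compat; nra].
    - right; field; lra. }
  assert (c / 2 * (Y * (W * Rabs v)) <= c / 2 * (Y * P))
    by (apply Rmult_le_compat_l, Rmult_le_compat_l; lra).
  assert (c / 2 * (Zq * P) <= c / 2 * (Y * P))
    by (apply Rmult_le_compat_l, Rmult_le_compat_r; nra).
  assert (0 <= gamma * p * phi1 C p q al be u v z) by (repeat apply Rmult_le_pos; lra).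
  unfold P in *; lra.
Qed.

End Phi1.

Lemma Qop_phi1_sum_eq C p1 q1 a1 b1 p2 q2 a2 b2 u v : v <> 0 ->
  Qop (fun u' v' z' => phi1 C p1 q1 a1 b1 u' v' z' + phi1 C p2 q2 a2 b2 u' v' z') u v 1
  = (p1 / 3 - q1) * Rpower (rad u v) p1 * phi1_psi C a1 b1 (u / Rabs v)
    + (p2 / 3 - q2) * Rpower (rad u v) p2 * phi1_psi C a2 b2 (u / Rabs v).
Proof.
  intros Hv.
  pose proof (is_derive_profile ((p1 + b1) / 2) (phi1_A C b1) (b1 / (2 * C))
    ((a1 - b1 - 1) / 2) (1 / C)) as HD1.
  pose proof (is_derive_profile ((p2 + b2) / 2) (phi1_A C b2) (b2 / (2 * C))
    ((a2 - b2 - 1) / 2) (1 / C)) as HD2.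
  rewrite (Qop_off_axis _ (fun u' v' z' => homog _ p1 q1 u' v' z' + homog _ p2 q2 u' v' z'))
    by (auto; intros; now rewrite !phi1_homog).
  rewrite Qop_plus;
    [| eapply ex_derive_homog_u | eapply ex_derive_homog_u | eapply ex_derive_homog_v
     | eapply ex_derive_homog_v | apply ex_derive_homog_z | apply ex_derive_homog_z ];
    eauto; try lra.
  rewrite (Qop_homog _ _ p1 q1 HD1), (Qop_homog _ _ p2 q2 HD2) by (auto; lra).
  rewrite <- !phi1_homog, !phi1_eq, !Rpower_base_1 by auto.
  field.
Qed.

Lemma Qop_phi1_le C p1 a1 b1 p2 q2 a2 b2 :
  0 < C -> 0 < p1 < p2 -> 0 < b2 < 1 -> b2 <= a2 -> p2 / 3 < q2 ->
  exists R1, 0 < R1 /\ forall u v, v <> 0 -> - C * Rabs v <= u <= / C * Rabs v -> R1 <= rad u v ->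
    Qop (fun u' v' z' => phi1 C p1 0 a1 b1 u' v' z' + phi1 C p2 q2 a2 b2 u' v' z') u v 1
    <= - (q2 / 2 - p2 / 6) * Rpower (rad u v) p2.
Proof.
  intros HC Hp Hb2 Hab2 Hq2.
  destruct (continuous_bounded_above (phi1_psi C a1 b1) (- C) (1 / C)) as [B1 HB1];
    [pose proof (Rinv_0_lt_compat C HC); unfold Rdiv; lra | apply continuous_profile |].
  (* [del = kap (1 - b2/2) - kap/2] is the slack left by [phi1_psi_ge] that absorbs the
     [p1]-term. *)
  set (kap := q2 - p2 / 3); set (del := kap * (1 - b2) / 2).
  assert (Hdel : 0 < del)
    by (unfold del, kap; apply Rdiv_lt_0_compat; [apply Rmult_lt_0_compat |]; lra).
  set (X := p1 / 3 * Rabs B1 / del).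
  assert (HX : 0 <= X) by (apply Rdiv_le_0_compat; [pose proof (Rabs_pos B1); nra | lra]).
  exists (Rpower (X + 1) (/ (p2 - p1))); split; [apply exp_pos |].
  intros u v Hv Hu Hr.
  pose proof (sector_ratio C u v HC Hv Hu) as Hs.
  assert (Hr0 : 0 < rad u v) by (eapply Rlt_le_trans; [apply exp_pos | apply Hr]).
  pose proof (Rpower_inv_le (X + 1) (p2 - p1) (rad u v) ltac:(lra) ltac:(lra) Hr) as Hgap.
  rewrite Qop_phi1_sum_eq by auto.
  pose proof (HB1 _ Hs) as Hpsi1; pose proof (Rle_abs B1).
  pose proof (phi1_psi_ge C a2 b2 (u / Rabs v) HC Hb2 Hab2 ltac:(lra)) as Hpsi2.
  set (r1 := Rpower (rad u v) p1) in *.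
  replace (Rpower (rad u v) p2) with (r1 * Rpower (rad u v) (p2 - p1))
    by (unfold r1; rewrite <- Rpower_plus; f_equal; ring).
  set (g := Rpower (rad u v) (p2 - p1)) in *.
  assert (Hr1 : 0 < r1) by apply exp_pos.
  assert (p1 / 3 * r1 * phi1_psi C a1 b1 (u / Rabs v) <= del * X * r1).
  { unfold X; replace (del * (p1 / 3 * Rabs B1 / del) * r1) with (p1 / 3 * r1 * Rabs B1)
      by (field; lra).
    apply Rmult_le_compat_l; [nra | lra]. }
  assert (del * X * r1 <= del * (g - 1) * r1) by (apply Rmult_le_compat_r, Rmult_le_compat_l; lra).
  assert (kap * (1 - b2 / 2) * (r1 * g)
          <= kap * (r1 * g) * phi1_psi C a2 b2 (u / Rabs v)).
  { assert (0 < kap * (r1 * g)) by (apply Rmult_lt_0_compat; [unfold kap; lra | nra]). nra. }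
  replace (p1 / 3 - 0) with (p1 / 3) by ring.
  replace (p2 / 3 - q2) with (- kap) by (unfold kap; ring).
  replace (q2 / 2 - p2 / 6) with (kap / 2) by (unfold kap; field).
  assert (0 < del * r1) by (apply Rmult_lt_0_compat; lra).
  unfold del in *; nra.
Qed.

Theorem lemma6p2
  (gamma h k1 k2 p1 p2 q1 q2 a1 a2 b1 b2 C : R)
  (Hgamma : 0 < gamma) (Hh : 0 < h < 1) (Hk1 : 0 < k1) (Hk2 : 0 < k2)
  (Hp1 : 0 < p1) (Hp2 : 0 < p2) (Hq1 : q1 = 0) (Hq2 : 0 < q2)
  (Hb1 : alpha_h h * p1 - (1 - h) * q1 = b1) (Hb2 : alpha_h h * p2 - (1 - h) * q2 = b2)
  (Hb1pos : 0 < b1) (Hb2pos : 0 < b2)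
  (Hba1 : b1 < a1) (Hba2 : b2 < a2) (Ha1 : a1 < 1) (Ha2 : a2 < 1)
  (Hq2big : q2 > 1 / 3 * p2 + 1 / 2 * a2)
  (Hp21 : p2 > p1)
  (Hpa : p2 + 3 / 2 * a2 > p1 + 3 / 2 * a1)
  (HC : 0 < C) :
  exists R0 : R, 0 < R0 /\
  forall rstar : R, rstar >= R0 ->
    (forall u v z : R, region1 C rstar u v z ->
       Lop gamma h k1 k2 (phi1 C p1 q1 a1 b1) u v z
         <= - (b1 / (2 * C)) / 2 * Rpower (rad u v) (p1 + 1) * Rpower z q1
              * Rpower (Rabs (rad u v / v)) a1
       /\
       Lop gamma h k1 k2 (phi1 C p2 q2 a2 b2) u v z
         <= - (b2 / (2 * C)) / 2 * Rpower (rad u v) (p2 + 1) * Rpower z q2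
              * Rpower (Rabs (rad u v / v)) a2)
    /\
    (forall u v : R, region1 C rstar u v 1 ->
       Qop (fun u' v' z' => phi1 C p1 q1 a1 b1 u' v' z' + phi1 C p2 q2 a2 b2 u' v' z') u v 1
         <= - (q2 / 2 - p2 / 6) * Rpower (rad u v) p2).
Proof.
  subst q1.
  destruct (Lop_phi1_le C a1 b1 gamma h k1 k2 p1 0) as [W1 [HW1 HL1]]; try lra.
  destruct (Lop_phi1_le C a2 b2 gamma h k1 k2 p2 q2) as [W2 [HW2 HL2]]; try lra.
  destruct (Qop_phi1_le C p1 a1 b1 p2 q2 a2 b2) as [R1 [HR1 HQ]]; try lra.
  set (K := sqrt (1 + (C ^ 2 + (1 / C) ^ 2))).
  assert (HK : 0 < K) by (apply sqrt_lt_R0; nra).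
  exists (Rmax R1 (K * Rmax W1 W2)); split; [apply (Rlt_le_trans _ R1); [| apply Rmax_l]; auto |].
  intros rstar Hr.
  pose proof (Rmax_l R1 (K * Rmax W1 W2)); pose proof (Rmax_r R1 (K * Rmax W1 W2)).
  split.
  - intros u v z Hreg.
    destruct (region1_sector C rstar u v z HC ltac:(lra) Hreg) as [Hv [Hu Hrv]].
    fold K in Hrv; assert (Rmax W1 W2 <= Rabs v) by (apply (Rmult_le_reg_l K); auto; lra).
    pose proof (Rmax_l W1 W2); pose proof (Rmax_r W1 W2).
    destruct Hreg as [_ [_ [_ Hz]]].
    split; [apply HL1 | apply HL2]; auto; lra.
  - intros u v Hreg.
    destruct (region1_sector C rstar u v 1 HC ltac:(lra) Hreg) as [Hv [Hu _]].
    destruct Hreg as [Hrad _].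
    apply HQ; auto; lra.
Qed.
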